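(* Let $(G_x \mid x \in \mathbb{N}_0)$ be the coclass family defined by $\eta \in H^3(P,T)$, let $L$ be an elementary abelian subgroup of $P$ and $x \in \mathbb{N}_0$. Then: (a) $\overline{L}_x$ splits over $M_x$ if and only if $L \in \mathcal{L}_\eta$; (b) if $\overline{L}_x$ splits over $M_x$, then $\overline{L}$ splits over $T$.
   Context: Conventions: normalised cocycles $Z^n$, coboundaries $B^n$, cohomology $H^n$ for right modules written additively; $\mathrm{Ext}(\tau)$ for $\tau\in Z^2(G,M)$ is $G\times M$ with $(g,m)(h,n)=(gh,m^h+n+\tau(g,h))$. Setting: $S$ an infinite pro-$p$-group of finite coclass; $T = \gamma_\ell(S)$ ($\ell$ large) with $T\cong \mathbb{Z}_p^d$, $P = S/T$ finite with $|P| = p^m$, the series $T_0=T$, $T_{i+1}=[T_i,S]$ with all indices $p$; $T$ an additive $P$-module via conjugation; $S = \mathrm{Ext}(\rho)$, $\rho \in Z^2(P,T)$. For $L\leq P$, $\overline{L}$ is the full preimage of $L$ in $S$. $\mathcal{L}$ is the set of elementary abelian $L\leq P$ with $\rho_L \in B^2(L,T)$, and $\mathcal{L}_\eta = \{L\in\mathcal{L} \mid \mathrm{res}^P_L(\eta) = 0 \in H^3(L,T)\}$. Coclass family: $e=3m$, $M_x = T/p^{x+e}T$; $pro_x: Z^2(P,T)\to Z^2(P,M_x)$ induced by projection, with image $I^2(P,M_x)$; $J^2(P,M_x)$ the image of $Z^2(P,p^{x+e-m}T/p^{x+e}T)\to Z^2(P,M_x)$ induced by inclusion; $K^2(P,M_x)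 \leq J^2(P,M_x)$ fixed complements of $I^2(P,M_x)$ in $Z^2(P,M_x)$ with $mul(K^2(P,M_x)) = K^2(P,M_{x+1})$, $mul$ induced by $t+p^{x+e}T\mapsto pt+p^{x+e+1}T$. The composite $Z^2(P,M_x)\to H^2(P,M_x)\to H^3(P,p^{x+e}T)\to H^3(P,T)$ (quotient, connecting homomorphism, division by $p^{x+e}$) restricts to an isomorphism on $K^2(P,M_x)$; $\eta_x\in K^2(P,M_x)$ is the preimage of $\eta$, $\rho_x = pro_x(\rho)$, $G_x = \mathrm{Ext}(\rho_x+\eta_x)$, with $M_x$ identified with $\{(1,m)\}$. For $L \leq P$, $\overline{L}_x$ is the full preimage of $L$ under $G_x \to P$, $(g,m)\mapsto g$. *)

From HB Require Import structures.
From mathcomp Require Import all_boot all_order all_algebra all_fingroup all_solvable.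
From mathcomp Require Import boolp.
Set Implicit Arguments. Unset Strict Implicit. Unset Printing Implicit Defensive.
Import GRing.Theory.
Local Open Scope ring_scope.

Section PAdic.
Variable p : nat.
Definition padic_ok (f : nat -> int) := forall n, f n = (f n.+1 %% (p ^ n)%:Z)%Z.
Record padic := Padic { padic_val :> nat -> int; padic_valP : padic_ok padic_val }.
HB.instance Definition _ := gen_eqMixin padic.
HB.instance Definition _ := gen_choiceMixin padic.

Lemma padic_eq (a b : padic) : padic_val a =1 padic_val b -> a = b.
Proof.
case: a b => f fP [g gP] /= /funext efg; subst g.
by rewrite (Prop_irrelevance fP gP).
Qed.

Lemma modz_mulr_mod (a q r : int) : (((a %% (q * r))%Z %% q)%Z = (a %% q)%Z).
Proof.
rewrite [in RHS](intdiv.divz_eq a (q * r)) mulrA -[_ * q * r]mulrA [q * r]mulrC mulrA.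
by rewrite intdiv.modzMDl.
Qed.

Lemma padic_red (a : padic) n : ((a n) %% (p ^ n)%:Z)%Z = a n.
Proof. by rewrite (padic_valP a n) modz_mod. Qed.

Definition padic_lift (h : nat -> int) := fun n => (h n %% (p ^ n)%:Z)%Z.

Lemma padic_liftP (h : nat -> int) :
  (forall n, (h n.+1 = h n %[mod (p ^ n)%:Z])%Z) -> padic_ok (padic_lift h).
Proof.
move=> hc n; rewrite /padic_lift expnSr PoszM modz_mulr_mod.
by rewrite hc.
Qed.

Lemma padic_addC_ok (a b : padic) : padic_ok (padic_lift (fun n => a n + b n)).
Proof.
apply: padic_liftP => n.
by rewrite -modzDml -modzDmr -!padic_valP.
Qed.

Lemma padic_opp_ok (a : padic) : padic_ok (padic_lift (fun n => - a n)).
Proof. by apply: padic_liftP => n; rewrite -modzNm -padic_valP. Qed.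

Lemma padic_zero_ok : padic_ok (padic_lift (fun _ => 0)).
Proof. by apply: padic_liftP. Qed.

Definition padic_add a b := Padic (padic_addC_ok a b).
Definition padic_opp a := Padic (padic_opp_ok a).
Definition padic_zero := Padic padic_zero_ok.

Lemma padic_addA : associative padic_add.
Proof.
move=> a b c; apply: padic_eq => n /=; rewrite /padic_lift.
by rewrite modzDml modzDmr addrA.
Qed.
Lemma padic_addC : commutative padic_add.
Proof. by move=> a b; apply: padic_eq => n /=; rewrite /padic_lift addrC. Qed.
Lemma padic_add0 : left_id padic_zero padic_add.
Proof.
by move=> a; apply: padic_eq => n /=; rewrite /padic_lift mod0z add0r padic_red.
Qed.
Lemma padic_addN : left_inverse padic_zero padic_opp padic_add.
Proof.
move=> a; apply: padic_eq => n /=; rewrite /padic_lift modzDml addNr.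
by rewrite mod0z.
Qed.

HB.instance Definition _ :=
  GRing.isZmodule.Build padic padic_addA padic_addC padic_add0 padic_addN.
End PAdic.

Section Cohomology.
Variables (p : nat) (gT : finGroupType) (T : zmodType) (act : T -> gT -> T).

Definition is_right_action :=
  [/\ forall t, act t 1%g = t,
      forall t g h, act t (g * h)%g = act (act t g) h
    & forall t1 t2 g, act (t1 + t2) g = act t1 g + act t2 g].

(* a = b in T / p^k T *)
Definition eqmod (k : nat) (a b : T) := exists t : T, a - b = t *+ (p ^ k)%N.

(* Ext(tau) = gT x T with (g,m)(h,n) = (gh, m^h + n + tau(g,h)) *)
Definition ext_mul (tau : gT -> gT -> T) (a b : gT * T) : gT * T :=
  ((a.1 * b.1)%g, act a.2 b.1 + b.2 + tau a.1 b.1).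
Definition ext_inv (tau : gT -> gT -> T) (a : gT * T) : gT * T :=
  ((a.1)^-1%g, - act a.2 (a.1)^-1%g - tau a.1 (a.1)^-1%g).
Definition ext_comm tau (a b : gT * T) :=
  ext_mul tau (ext_mul tau (ext_inv tau a) (ext_inv tau b)) (ext_mul tau a b).

Inductive ext_gen (tau : gT -> gT -> T) (A : gT * T -> Prop) : gT * T -> Prop :=
| ext_gen1 : ext_gen tau A (1%g, 0)
| ext_genA z : A z -> ext_gen tau A z
| ext_genM y z : ext_gen tau A y -> ext_gen tau A z -> ext_gen tau A (ext_mul tau y z)
| ext_genV z : ext_gen tau A z -> ext_gen tau A (ext_inv tau z).

(* closure in the pro-p topology of Ext(tau), whose basis of neighbourhoods
   of 1 is the family of (open normal) subgroups {1} x p^n T *)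
Definition ext_closure tau (A : gT * T -> Prop) (z : gT * T) :=
  forall n, exists y t, A y /\ z = ext_mul tau y (1%g, t *+ (p ^ n)%N).

Definition ext_commsub tau (A B : gT * T -> Prop) :=
  ext_closure tau
    (ext_gen tau (fun z => exists a b, [/\ A a, B b & z = ext_comm tau a b])).

(* lower central series of S = Ext(tau): ext_lcs tau n = gamma_n(S),
   gamma_0 = gamma_1 = S, gamma_{n+1} = [gamma_n, S] *)
Fixpoint ext_lcs tau (n : nat) : gT * T -> Prop :=
  if n is n'.+1 then
    (if n' is _.+1 then ext_commsub tau (ext_lcs tau n') (fun _ => True)
     else fun _ => True)
  else fun _ => True.

(* the series T_0 = T = {(1,t)}, T_{i+1} = [T_i, S] *)
Fixpoint ext_Tser tau (i : nat) : gT * T -> Prop :=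
  if i is i'.+1 then ext_commsub tau (ext_Tser tau i') (fun _ => True)
  else fun z => z.1 = 1%g.

Definition ext_index tau (X Y : gT * T -> Prop) (k : nat) :=
  (forall y, Y y -> X y) /\
  exists s : 'I_k -> gT * T, (forall i, X (s i)) /\
    forall z, X z -> exists! i, Y (ext_mul tau (ext_inv tau (s i)) z).

Definition delta1 (c : gT -> T) (g h : gT) : T :=
  c h - c (g * h)%g + act (c g) h.
Definition delta2 (u : gT -> gT -> T) (g h k : gT) : T :=
  u h k - u (g * h)%g k + u g (h * k)%g - act (u g h) k.
Definition delta3 (f : gT -> gT -> gT -> T) (g1 g2 g3 g4 : gT) : T :=
  f g2 g3 g4 - f (g1 * g2)%g g3 g4 + f g1 (g2 * g3)%g g4
  - f g1 g2 (g3 * g4)%g + act (f g1 g2 g3) g4.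

(* tau restricted to A lies in Z^2(A, M), where M = T / ~ for eqv = equality
   (M = T) or eqv = eqmod k (M = T / p^k T) *)
Definition ncocycle2 (A : {set gT}) (eqv : T -> T -> Prop) (tau : gT -> gT -> T) :=
  (forall g, g \in A -> eqv (tau 1%g g) 0 /\ eqv (tau g 1%g) 0) /\
  (forall g h k, g \in A -> h \in A -> k \in A -> eqv (delta2 tau g h k) 0).

Definition ncobound2 (A : {set gT}) (eqv : T -> T -> Prop) (tau : gT -> gT -> T) :=
  exists c : gT -> T, c 1%g = 0 /\
    forall g h, g \in A -> h \in A -> eqv (tau g h) (delta1 c g h).

Definition ncocycle3 (A : {set gT}) (f : gT -> gT -> gT -> T) :=
  (forall g h, g \in A -> h \in A ->
     [/\ f 1%g g h = 0, f g 1%g h = 0 & f g h 1%g = 0]) /\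
  (forall g1 g2 g3 g4, g1 \in A -> g2 \in A -> g3 \in A -> g4 \in A ->
     delta3 f g1 g2 g3 g4 = 0).

Definition ncobound3 (A : {set gT}) (f : gT -> gT -> gT -> T) :=
  exists u : gT -> gT -> T,
    (forall g, g \in A -> u 1%g g = 0 /\ u g 1%g = 0) /\
    forall g h k, g \in A -> h \in A -> k \in A -> f g h k = delta2 u g h k.

(* The full preimage of A in Ext(tau) (tau with values in M = T/~) splits over
   M: there is a homomorphic section A -> Ext(tau), g |-> (g, c g), i.e. the
   image of the section is a complement to M. *)
Definition ext_splits (A : {set gT}) (eqv : T -> T -> Prop) (tau : gT -> gT -> T) :=
  exists c : gT -> T, forall g h, g \in A -> h \in A ->
    let z := ext_mul tau (g, c g) (h, c h) in
    z.1 = (g * h)%g /\ eqv z.2 (c (g * h)%g).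

(* The composite Z^2(P, T/p^k T) -> H^2 -> H^3(P, p^k T) -> H^3(P, T) maps the
   class of tau to the class of the 3-cocycle eta3: lift tau to a normalised
   T-valued cochain tau', take delta2 tau' (values in p^k T), divide by p^k. *)
Definition conn_map (k : nat) (tau : gT -> gT -> T) (eta3 : gT -> gT -> gT -> T) :=
  exists (tau' : gT -> gT -> T) (f : gT -> gT -> gT -> T),
    [/\ forall g h, eqmod k (tau g h) (tau' g h),
        forall g, tau' 1%g g = 0 /\ tau' g 1%g = 0,
        forall g h l, delta2 tau' g h l = f g h l *+ (p ^ k)%N
      & ncobound3 [set: gT] (fun g h l => f g h l - eta3 g h l)].

(* I^2(P, M_k) = image of pro : Z^2(P,T) -> Z^2(P, T/p^k T) *)
Definition in_I2 (k : nat) (tau : gT -> gT -> T) :=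
  exists sigma, ncocycle2 [set: gT] eq sigma /\
    forall g h, eqmod k (tau g h) (sigma g h).

(* Hypotheses defining the coclass family (G_x) attached to eta3 (a
   representative of eta in H^3(P,T)), with |P| = p^m, e = 3m,
   M_x = T/p^(x+e)T, K x = K^2(P,M_x) (as a set of T-valued representatives)
   and etax x = eta_x. *)
Definition coclass_family_data (m : nat) (rho : gT -> gT -> T)
    (eta3 : gT -> gT -> gT -> T) (K : nat -> (gT -> gT -> T) -> Prop)
    (etax : nat -> gT -> gT -> T) :=
  forall x : nat, let k := (x + 3 * m)%N in
  [/\ (* K x is a subgroup of Z^2(P, M_x), closed under the equality of M_x *)
      [/\ K x (fun _ _ => 0),
          forall t1 t2, K x t1 -> K x t2 -> K x (fun g h => t1 g h - t2 g h),
          forall t, K x t -> ncocycle2 [set: gT] (eqmod k) t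
        & forall t t', K x t -> (forall g h, eqmod k (t g h) (t' g h)) -> K x t'],
      (* K^2(P,M_x) <= J^2(P,M_x) *)
      forall t, K x t -> forall g h, exists s, eqmod k (t g h) (s *+ (p ^ (k - m))%N),
      (* K^2(P,M_x) is a complement of I^2(P,M_x) in Z^2(P,M_x) *)
      (forall t, K x t -> in_I2 k t -> forall g h, eqmod k (t g h) 0) /\
      (forall t, ncocycle2 [set: gT] (eqmod k) t -> exists t1 t2,
         [/\ K x t1, in_I2 k t2 & forall g h, eqmod k (t g h) (t1 g h + t2 g h)]),
      (* mul(K^2(P,M_x)) = K^2(P,M_{x+1}) *)
      (forall t', K x.+1 t' <-> exists t, K x t /\
         forall g h, eqmod k.+1 (t' g h) (t g h *+ p))
    & (* the composite map restricted to K^2(P,M_x) is an isomorphism onto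
         H^3(P,T) *)
      [/\ forall t1 t2 f, K x t1 -> K x t2 -> conn_map k t1 f -> conn_map k t2 f ->
             forall g h, eqmod k (t1 g h) (t2 g h),
           forall f, ncocycle3 [set: gT] f -> exists t, K x t /\ conn_map k t f,
           (* eta_x is the preimage of eta in K^2(P,M_x) *)
           K x (etax x)
         & conn_map k (etax x) eta3]].

Definition in_L_eta (rho : gT -> gT -> T) (eta3 : gT -> gT -> gT -> T)
    (L : {set gT}) :=
  [/\ (p.-abelem L)%g, ncobound2 L eq rho & ncobound3 L eta3].

End Cohomology.

(* The preimage of L in G_x splits over M_x exactly when rho + eta_x is a
   coboundary on L modulo p^(x+e).  Averaging over the first variable shows
   that |L| annihilates H^2(L, T); since |L| divides p^m <= p^(x+e-m) and T
   has no p-torsion, every normalised cocycle on L with values in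
   p^(x+e-m) T is then a coboundary.  As eta_x lies in p^(x+e-m) M_x, this
   splits the condition into "rho is a coboundary on L" and "eta_x is a
   coboundary on L modulo p^(x+e)", and the latter holds iff eta vanishes in
   H^3(L, T): lifting eta_x to T, applying the coboundary and dividing by
   p^(x+e) commutes with restriction to L, and T has no p-torsion. *)

From HB Require Import structures.
From mathcomp Require Import all_boot all_order all_algebra all_fingroup all_solvable.
From mathcomp Require Import boolp.
Set Implicit Arguments. Unset Strict Implicit. Unset Printing Implicit Defensive.
Import GRing.Theory.
Local Open Scope ring_scope.

(* Proves an equation in an abelian group whose two sides agree once opposite
   summands are cancelled: everything is moved to the left of [= 0] and each
   [- x] is commuted next to a matching [x]. *)
Ltac zmod_cancel_left := repeat match goal with
 | |- context [- ?x] =>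
    rewrite ?(addrAC _ (- x)) ?(addrAC _ x); first [rewrite addrK | rewrite subrK]
 end.
Ltac zmod_cancel :=
  apply/eqP; rewrite -subr_eq0; apply/eqP;
  match goal with |- ?a = 0 => rewrite -(add0r a) end;
  rewrite ?opprD ?opprK ?oppr0 ?addr0 ?addrA; zmod_cancel_left;
  rewrite ?addr0 ?add0r ?subr0; try reflexivity.

Lemma choice2_in (aT : Type) (T : zmodType) (A : {pred aT})
    (P : aT -> aT -> T -> Prop) :
  (forall g h, g \in A -> h \in A -> exists s, P g h s) ->
  exists s : aT -> aT -> T, forall g h, g \in A -> h \in A -> P g h (s g h).
Proof.
move=> exP.
have exP' : forall gh : aT * aT, exists s, gh.1 \in A -> gh.2 \in A -> P gh.1 gh.2 s.
  move=> [g h] /=; case: (boolP (g \in A)) => gA; last by exists 0.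
  case: (boolP (h \in A)) => hA; last by exists 0.
  by have [s Ps] := exP g h gA hA; exists s.
have [s Ps] := choice exP'.
by exists (fun g h => s (g, h)) => g h gA hA; apply: (Ps (g, h)).
Qed.

Section EqMod.
Variables (p : nat) (T : zmodType).
Implicit Types (a b c t : T) (j k : nat).

Lemma eqmod_sym k a b : eqmod p k a b -> eqmod p k b a.
Proof. by case=> t abE; exists (- t); rewrite mulNrn -abE opprB. Qed.

Lemma eqmod_trans k a b c : eqmod p k a b -> eqmod p k b c -> eqmod p k a c.
Proof.
by case=> t1 E1 [t2 E2]; exists (t1 + t2); rewrite mulrnDl -E1 -E2 addrA subrK.
Qed.

Lemma eqmodDr k a b c : eqmod p k a b -> eqmod p k (a + c) (b + c).
Proof. by case=> t E; exists t; rewrite opprD addrACA subrr addr0. Qed.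

Lemma eqmodW j k a b : (j <= k)%N -> eqmod p k a b -> eqmod p j a b.
Proof.
by move=> le_jk [t E]; exists (t *+ (p ^ (k - j))); rewrite -mulrnA -expnD subnK.
Qed.

Lemma eqmod_mulrn0 k t : eqmod p k (t *+ (p ^ k)) 0.
Proof. by exists t; rewrite subr0. Qed.

End EqMod.

Section Coboundaries.
Variables (gT : finGroupType) (T : zmodType) (act : T -> gT -> T).
Hypothesis actP : is_right_action act.

Lemma act1 t : act t 1%g = t. Proof. by case: actP. Qed.
Lemma actM t g h : act t (g * h)%g = act (act t g) h. Proof. by case: actP. Qed.
Lemma actD t1 t2 g : act (t1 + t2) g = act t1 g + act t2 g. Proof. by case: actP. Qed.

Lemma act0 g : act 0 g = 0.
Proof. by apply: (addrI (act 0 g)); rewrite -actD !addr0. Qed.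

Lemma actN t g : act (- t) g = - act t g.
Proof. by apply/eqP; rewrite -addr_eq0 -actD addNr act0. Qed.

Lemma actMn t g n : act (t *+ n) g = act t g *+ n.
Proof. by elim: n => [|n IHn]; rewrite ?act0 // !mulrS actD IHn. Qed.

Lemma act_sum (A : {set gT}) (F : gT -> T) h :
  act (\sum_(g in A) F g) h = \sum_(g in A) act (F g) h.
Proof. by apply: (big_morph (act^~ h)) => [a b|]; rewrite ?actD ?act0. Qed.

Lemma delta2_delta1 c g h l : delta2 act (delta1 act c) g h l = 0.
Proof. by rewrite /delta2 /delta1 !actD actN !actM -!mulgA; zmod_cancel. Qed.

Lemma delta1D a b g h :
  delta1 act (fun y => a y + b y) g h = delta1 act a g h + delta1 act b g h.
Proof. by rewrite /delta1 actD; zmod_cancel. Qed.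

Lemma delta1N a g h : delta1 act (fun y => - a y) g h = - delta1 act a g h.
Proof. by rewrite /delta1 actN; zmod_cancel. Qed.

Lemma delta1Mn a n g h :
  delta1 act (fun y => a y *+ n) g h = delta1 act a g h *+ n.
Proof. by rewrite /delta1 actMn mulrnDl mulrnBl. Qed.

Lemma delta2D u v g h l :
  delta2 act (fun x y => u x y + v x y) g h l
  = delta2 act u g h l + delta2 act v g h l.
Proof. by rewrite /delta2 actD; zmod_cancel. Qed.

Lemma delta2B u v g h l :
  delta2 act (fun x y => u x y - v x y) g h l
  = delta2 act u g h l - delta2 act v g h l.
Proof. by rewrite /delta2 actD actN; zmod_cancel. Qed.

Lemma delta2Mn u n g h l :
  delta2 act (fun x y => u x y *+ n) g h l = delta2 act u g h l *+ n.
Proof. by rewrite /delta2 actMn mulrnBl mulrnDl mulrnBl. Qed.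

Lemma delta1_normal a g :
  a 1%g = 0 -> delta1 act a 1%g g = 0 /\ delta1 act a g 1%g = 0.
Proof.
move=> a1; rewrite /delta1 a1 act0 act1 mul1g mulg1.
by split; zmod_cancel.
Qed.

Lemma eq_in_delta2 (A : {group gT}) u v g h l :
  {in A &, u =2 v} -> g \in A -> h \in A -> l \in A ->
  delta2 act u g h l = delta2 act v g h l.
Proof. by move=> uv gA hA lA; rewrite /delta2 !uv ?groupM. Qed.

Lemma ncocycle2S (A B : {set gT}) eqv u :
  A \subset B -> ncocycle2 act B eqv u -> ncocycle2 act A eqv u.
Proof.
move=> /subsetP sAB [u_n u_c]; split=> [g gA|g h l gA hA lA].
  exact: u_n (sAB g gA).
exact: u_c (sAB g gA) (sAB h hA) (sAB l lA).
Qed.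

Lemma ncocycle2_subr_delta1 (A : {group gT}) u c :
  ncocycle2 act A eq u -> c 1%g = 0 ->
  ncocycle2 act A eq (fun g h => u g h - delta1 act c g h).
Proof.
move=> [u_n u_c] c1; split=> [g gA|g h l gA hA lA].
  have [[-> ->] [-> ->]] := (u_n g gA, delta1_normal g c1).
  by rewrite subrr.
by rewrite delta2B delta2_delta1 subr0; apply: u_c.
Qed.

(* Averaging the cocycle identity over the first variable. *)
Lemma ncocycle2_mulr_card (A : {group gT}) u h l :
  ncocycle2 act A eq u -> h \in A -> l \in A ->
  u h l *+ #|A| = delta1 act (fun y => \sum_(g in A) u g y) h l.
Proof.
move=> [_ u_c] hA lA.
have sum0 : \sum_(g in A) delta2 act u g h l = 0.
  by apply: big1 => g gA; apply: u_c.
have sum_mulg : \sum_(g in A) u (g * h)%g l = \sum_(g in A) u g l.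
  by rewrite [RHS](reindex_inj (mulIg h)); apply: eq_bigl => g; rewrite groupMr.
move: sum0; rewrite /delta2 sumrB big_split sumrB /= sumr_const sum_mulg -act_sum.
move=> sum0; apply/eqP; rewrite -subr_eq0; apply/eqP.
by rewrite -[RHS]sum0 /delta1; zmod_cancel.
Qed.

Lemma ncobound2_ext_splits (A : {set gT}) eqv sigma :
  (forall a b c, eqv a b -> eqv (a + c) (b + c)) ->
  ncobound2 act A eqv sigma -> ext_splits act A eqv sigma.
Proof.
move=> eqvDr [a [_ sigmaE]]; exists (fun y => - a y) => g h gA hA /=; split=> //.
have -> : act (- a g) h + - a h + sigma g h = sigma g h + (act (- a g) h - a h).
  by rewrite addrC.
have -> : - a (g * h)%g = delta1 act a g h + (act (- a g) h - a h).
  by rewrite /delta1 actN; zmod_cancel.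
exact/eqvDr/sigmaE.
Qed.

Variable p : nat.

(* A section splits modulo p^k only up to the constant [c 1]; subtracting
   that constant at [1] makes the cochain normalised. *)
Lemma ext_splitsP (A : {group gT}) k sigma :
  eqmod p k (sigma 1%g 1%g) 0 ->
  ext_splits act A (eqmod p k) sigma <-> ncobound2 act A (eqmod p k) sigma.
Proof.
move=> [t0 t0E]; split; last exact/ncobound2_ext_splits/eqmodDr.
move=> [c cP].
have [t1] := (cP 1%g 1%g (group1 A) (group1 A)).2.
rewrite /= mulg1 act1 => t1E.
have c1E : c 1%g = (t1 - t0) *+ (p ^ k) by rewrite mulrnBl -t1E -t0E; zmod_cancel.
pose dt (y : gT) := if y == 1%g then t1 - t0 else 0.
exists (fun y => - c y + dt y *+ (p ^ k)); split; first by rewrite /dt eqxx c1E addNr.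
move=> g h gA hA; have [tX /= tXE] := (cP g h gA hA).2.
exists (tX - (dt h - dt (g * h)%g + act (dt g) h)).
by rewrite mulrnBl mulrnDl mulrnBl -tXE /delta1 actD actN !actMn; zmod_cancel.
Qed.

Lemma ncobound2_addl (A : {set gT}) k u v :
  ncobound2 act A eq u -> ncobound2 act A (eqmod p k) v ->
  ncobound2 act A (eqmod p k) (fun g h => u g h + v g h).
Proof.
move=> [a [a1 uE]] [b [b1 vE]]; exists (fun y => a y + b y).
split=> [|g h gA hA]; first by rewrite a1 b1 addr0.
have [t tE] := vE g h gA hA; exists t.
by rewrite delta1D uE // -tE; zmod_cancel.
Qed.

Lemma ncobound2_addKl (A : {set gT}) k u v :
  ncobound2 act A eq u ->
  ncobound2 act A (eqmod p k) (fun g h => u g h + v g h) ->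
  ncobound2 act A (eqmod p k) v.
Proof.
move=> [a [a1 uE]] [b [b1 uvE]]; exists (fun y => b y - a y).
split=> [|g h gA hA]; first by rewrite a1 b1 subr0.
have [t tE] := uvE g h gA hA; exists t.
by rewrite delta1D delta1N -uE // -tE; zmod_cancel.
Qed.

End Coboundaries.

Section TorsionFree.
Variables (p : nat) (gT : finGroupType) (T : zmodType) (act : T -> gT -> T).
Hypothesis actP : is_right_action act.
Hypothesis T_ptorsionfree : forall j (t : T), t *+ (p ^ j) = 0 -> t = 0.

(* |L| annihilates H^2(L, T), and T has no p-torsion. *)
Lemma ncobound2_divisible (L : {group gT}) j z :
  (#|L| %| p ^ j)%N -> ncocycle2 act L eq z ->
  (forall g h, g \in L -> h \in L -> eqmod p j (z g h) 0) ->
  ncobound2 act L eq z.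
Proof.
move=> dvd_L_pj [z_n z_c] z_div.
have [s sE] := choice2_in z_div.
have {}sE g h : g \in L -> h \in L -> z g h = s g h *+ (p ^ j).
  by move=> gL hL; rewrite -sE // subr0.
have s_cocycle : ncocycle2 act L eq s.
  split=> [g gL|g h l gL hL lL].
    by split; apply: (T_ptorsionfree (j := j)); rewrite -sE ?group1 //; case: (z_n g gL).
  apply: (T_ptorsionfree (j := j)); rewrite -delta2Mn // -(z_c g h l gL hL lL).
  by apply: (@eq_in_delta2 _ _ act L) => // x y xL yL; rewrite sE.
have [q pjE] := dvdnP dvd_L_pj.
exists (fun y => (\sum_(g in L) s g y) *+ q); split.
  by rewrite big1 ?mul0rn // => g gL; case: s_cocycle => s_n _; case: (s_n g gL).
move=> g h gL hL.
by rewrite sE // pjE mulnC mulrnA (ncocycle2_mulr_card actP) // delta1Mn.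
Qed.

Variables (L : {group gT}) (k : nat) (t : gT -> gT -> T).

Lemma conn_map_ncobound3 eta3 :
  conn_map p act k t eta3 -> ncobound2 act L (eqmod p k) t -> ncobound3 act L eta3.
Proof.
move=> [t' [f [t't t'_n t'f [v [v_n vE]]]]] [e [e1 tE]].
have t'E g h : g \in L -> h \in L -> eqmod p k (t' g h) (delta1 act e g h).
  by move=> gL hL; apply: eqmod_trans (tE g h gL hL); apply: eqmod_sym.
have [w wE] := choice2_in t'E.
have w_n g : g \in L -> w 1%g g = 0 /\ w g 1%g = 0.
  have [[e1g eg1] [t'1g t'g1]] := (delta1_normal actP g e1, t'_n g).
  by move=> gL; split; apply: (T_ptorsionfree (j := k));
    rewrite -wE ?group1 // ?e1g ?eg1 ?t'1g ?t'g1 subrr.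
have fE g h l : g \in L -> h \in L -> l \in L -> f g h l = delta2 act w g h l.
  move=> gL hL lL; apply/eqP; rewrite -subr_eq0; apply/eqP.
  apply: (T_ptorsionfree (j := k)); rewrite mulrnBl -t'f -delta2Mn //.
  rewrite (@eq_in_delta2 _ _ act L t' (fun x y => delta1 act e x y + w x y *+ (p ^ k))) //.
    by rewrite delta2D // delta2_delta1 // add0r subrr.
  by move=> x y xL yL; rewrite -wE //; zmod_cancel.
exists (fun x y => w x y - v x y); split.
  move=> g gL; have [[w1 w2] [v1 v2]] := (w_n g gL, v_n g (in_setT g)).
  by rewrite w1 w2 v1 v2 subrr.
move=> g h l gL hL lL; rewrite delta2B // -fE // -vE ?in_setT //; zmod_cancel.
Qed.

Variable j : nat.
Hypotheses (le_jk : (j <= k)%N) (dvd_L_pj : (#|L| %| p ^ j)%N).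
Hypothesis t_div : forall g h, eqmod p j (t g h) 0.

Lemma ncobound3_conn_map eta3 :
  conn_map p act k t eta3 -> ncobound3 act L eta3 -> ncobound2 act L (eqmod p k) t.
Proof.
move=> [t' [f [t't t'_n t'f [v [v_n vE]]]]] [u [u_n uE]].
pose z g h := t' g h - (u g h + v g h) *+ (p ^ k).
have z_cocycle : ncocycle2 act L eq z.
  split=> [g gL|g h l gL hL lL].
    have [[t1 t2] [u1 u2]] := (t'_n g, u_n g gL); have [v1 v2] := v_n g (in_setT g).
    by rewrite /z t1 t2 u1 u2 v1 v2 addr0 mul0rn subrr.
  rewrite /z delta2B // delta2Mn // delta2D // t'f -uE // -vE ?in_setT //.
  by rewrite mulrnDl mulrnBl; zmod_cancel.
have zt g h : eqmod p k (z g h) (t g h).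
  apply: eqmod_trans (eqmod_sym (t't g h)).
  by exists (- (u g h + v g h)); rewrite mulNrn /z; zmod_cancel.
have [b [b1 zE]] : ncobound2 act L eq z.
  apply: ncobound2_divisible dvd_L_pj z_cocycle _ => g h _ _.
  exact: eqmod_trans (eqmodW le_jk (zt g h)) (t_div g h).
by exists b; split=> // g h gL hL; rewrite -zE //; apply: eqmod_sym.
Qed.

Lemma ncobound2_addKr_divisible rho :
  ncocycle2 act [set: gT] eq rho ->
  ncobound2 act L (eqmod p k) (fun g h => rho g h + t g h) ->
  ncobound2 act L eq rho.
Proof.
move=> rho_cocycle [a [a1 aE]].
have [b [b1 bE]] : ncobound2 act L eq (fun g h => rho g h - delta1 act a g h).
  apply: (ncobound2_divisible dvd_L_pj).
    exact: (ncocycle2_subr_delta1 actP (ncocycle2S (subsetT L) rho_cocycle) a1).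
  move=> g h gL hL; have [s sE] := aE g h gL hL; have [s' s'E] := t_div g h.
  exists (s *+ (p ^ (k - j)) - s').
  by rewrite mulrnBl -mulrnA -expnD subnK // -sE -s'E; zmod_cancel.
exists (fun y => a y + b y); split=> [|g h gL hL]; first by rewrite a1 b1 addr0.
by rewrite delta1D // -bE //; zmod_cancel.
Qed.

End TorsionFree.

Lemma padic_mulrnE p (a : padic p) N n :
  padic_val (a *+ N) n = ((a n * N%:Z) %% (p ^ n)%:Z)%Z.
Proof.
elim: N => [|N IHN]; first by rewrite mulr0 /= /padic_lift !mod0z.
rewrite mulrS /= /padic_lift IHN modzDmr.
by congr (_ %% _)%Z; rewrite -addn1 PoszD mulrDr mulr1 addrC.
Qed.

Lemma padic_val_modD p (a : padic p) n j : a n = (a (n + j)%N %% (p ^ n)%:Z)%Z.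
Proof.
elim: j => [|j IHj]; first by rewrite addn0 padic_red.
by rewrite IHj addnS (padic_valP a (n + j)) expnD PoszM modz_mulr_mod.
Qed.

Lemma padic_mulrn_expn_eq0 p j (a : padic p) :
  prime p -> a *+ (p ^ j) = 0 -> a = 0.
Proof.
move=> p_pr a0; apply: padic_eq => n.
have -> : padic_val (0 : padic p) n = 0 by rewrite /= /padic_lift mod0z.
rewrite (padic_val_modD a n j).
have := congr1 (fun b : padic p => padic_val b (n + j)%N) a0.
rewrite /= padic_mulrnE /padic_lift mod0z => /intdiv.dvdz_mod0P.
rewrite expnD !PoszM intdiv.dvdz_mul2r; first by move/intdiv.dvdz_mod0P.
by rewrite -lt0n expn_gt0 prime_gt0.
Qed.

Lemma rV_padic_mulrn_expn_eq0 p d j (t : 'rV[padic p]_d) :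
  prime p -> t *+ (p ^ j) = 0 -> t = 0.
Proof.
move=> p_pr t0; apply/matrixP => i l.
have := congr1 (fun M : 'rV[padic p]_d => M i l) t0.
by rewrite mulmxnE !mxE => /(padic_mulrn_expn_eq0 p_pr).
Qed.

Theorem lemma5p1 (p d m ell : nat) (gT : finGroupType)
    (act : 'rV[padic p]_d -> gT -> 'rV[padic p]_d)
    (rho : gT -> gT -> 'rV[padic p]_d)
    (eta3 : gT -> gT -> gT -> 'rV[padic p]_d)
    (K : nat -> (gT -> gT -> 'rV[padic p]_d) -> Prop)
    (etax : nat -> gT -> gT -> 'rV[padic p]_d)
    (L : {group gT}) (x : nat) :
  prime p -> (0 < d)%N -> #|gT| = (p ^ m)%N ->
  is_right_action act ->
  ncocycle2 act [set: gT] eq rho ->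
  (forall z, ext_lcs p act rho ell z <-> z.1 = 1%g) ->
  (forall i, ext_index act rho (ext_Tser p act rho i) (ext_Tser p act rho i.+1) p) ->
  ncocycle3 act [set: gT] eta3 ->
  coclass_family_data p act m rho eta3 K etax ->
  (p.-abelem L)%g ->
  (ext_splits act L (eqmod p (x + 3 * m)) (fun g h => rho g h + etax x g h)
     <-> in_L_eta p act rho eta3 L) /\
  (ext_splits act L (eqmod p (x + 3 * m)) (fun g h => rho g h + etax x g h) ->
     ext_splits act L eq rho).
Proof.
move=> p_pr _ card_gT actP rho_cocycle _ _ _ family L_abelem.
have [[_ _ K_cocycle _] K_J _ _ [_ _ K_etax conn_etax]] := family x.
set k := (x + 3 * m)%N in K_cocycle K_J conn_etax *.
have tf := rV_padic_mulrn_expn_eq0 (d := d) p_pr.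
have le_k : (k - m <= k)%N := leq_subr m k.
have le_mk : (m <= k - m)%N by rewrite /k mulSnr addnA addnK mul2n -addnn addnA leq_addl.
have dvd_L : (#|L| %| p ^ (k - m))%N.
  by rewrite (dvdn_trans _ (dvdn_exp2l p le_mk)) // -card_gT -cardsT cardSg ?subsetT.
have etax_div g h : eqmod p (k - m) (etax x g h) 0.
  have [s sE] := K_J _ K_etax g h.
  exact: eqmod_trans (eqmodW le_k sE) (eqmod_mulrn0 _ _ _).
have split11 : eqmod p k (rho 1%g 1%g + etax x 1%g 1%g) 0.
  rewrite (rho_cocycle.1 1%g (in_setT _)).1 add0r.
  by case: (K_cocycle _ K_etax) => /(_ 1%g (in_setT _)) [].
have rhoP := ncobound2_addKr_divisible actP tf le_k dvd_L etax_div rho_cocycle.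
rewrite /in_L_eta (ext_splitsP actP _ split11); split; first split.
- move=> splitL; split=> //; first exact: rhoP.
  exact/(conn_map_ncobound3 actP tf conn_etax)/(ncobound2_addKl actP (rhoP splitL)).
- case=> _ rho_cobound eta_cobound; apply: (ncobound2_addl actP rho_cobound).
  exact: (ncobound3_conn_map actP tf le_k dvd_L etax_div conn_etax eta_cobound).
- move=> /rhoP rho_cobound.
  by apply: (ncobound2_ext_splits actP _ rho_cobound) => a b c ->.
Qed.
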